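(* Let $m\in\mathbb{N}$ and let $d_1,\ldots,d_m$ and $l_1,\ldots,l_m$ be positive integers. For every partition of $\mathbb{N}$ into finitely many pairwise disjoint parts, there exist polynomials $P_1,\ldots,P_m$, with $P_i$ of degree exactly $d_i$ and with nonnegative integer coefficients, and one part $A$ of the partition such that $P_i(j)\in A$ for all $i=1,\ldots,m$ and $j=1,\ldots,l_i$. Moreover, the same conclusion holds with $A$ replaced by any given piecewise syndetic set $A\subseteq\mathbb{N}$.
   Context: $\mathbb{N}=\{1,2,3,\ldots\}$. A set $A\subseteq\mathbb{N}$ is piecewise syndetic if there is $b\in\mathbb{N}$ such that for every $n\in\mathbb{N}$ there is an interval $\{x,x+1,\ldots,x+n\}$ such that every $y$ in this interval satisfies $\{y,y+1,\ldots,y+b\}\cap A\neq\emptyset$; equivalently, $A$ belongs to some ultrafilter in the smallest ideal $K(\beta\mathbb{N})$ of $(\beta\mathbb{N},+)$. *)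

From HB Require Import structures.
From mathcomp Require Import all_boot all_order all_algebra.
Set Implicit Arguments. Unset Strict Implicit. Unset Printing Implicit Defensive.
Import GRing.Theory.

(* Subsets of N = {1,2,3,...} are represented as predicates on nat;
   membership of 0 is excluded explicitly where relevant. *)

Definition piecewise_syndetic (A : nat -> Prop) : Prop :=
  exists b : nat, forall n : nat, exists x : nat, 0 < x /\
    forall y : nat, x <= y <= x + n ->
      exists z : nat, y <= z <= y + b /\ A z.

Definition nat_poly_deg (P : {poly nat}) (d : nat) : Prop :=
  size P = d.+1.

(* Both statements follow from van der Waerden's theorem.  Put
   K = sum_i l_i ^ d_i.  If a, a + D, ..., a + K D all lie in one set B, then
   so do the values of P_i = D X^(d_i) + a at j = 1, ..., l_i, because
   P_i(j) = a + j^(d_i) D and j^(d_i) <= K.  Such progressions exist inside a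
   colour class of any finite colouring (van der Waerden), and inside any
   piecewise syndetic set A: colour each point y of a long interval all of
   whose points see A within b steps by the offset in [0, b] to the next
   element of A; a monochromatic progression of points, shifted by its common
   offset, then lies in A.  Van der Waerden's theorem itself is proved by the
   classical colour-focusing induction. *)

From mathcomp Require Import all_boot all_order all_algebra.
From mathcomp Require Import zify.
From Stdlib Require Import IndefiniteDescription.
Set Implicit Arguments. Unset Strict Implicit.

Definition mono_ap (T : eqType) (c : nat -> T) (k a d : nat) : Prop :=
  forall i, i <= k -> c (a + i * d) = c a.

Lemma mono_ap_extend (T : eqType) (c : nat -> T) k a d :
  mono_ap c k a d -> c (a + k.+1 * d) = c a -> mono_ap c k.+1 a d.
Proof. by move=> AP Ec i; rewrite leq_eqVlt => /orP[/eqP -> // | /AP]. Qed.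

(* The margin a + (k+1) d < N, one step beyond the progression, is what the
   focusing step needs. *)
Definition vdw_margin (k : nat) : Prop :=
  forall T : finType, exists N, forall c : nat -> T,
    exists a d, 0 < d /\ a + k.+1 * d < N /\ mono_ap c k a d.

Definition focused_aps (k : nat) (T : finType) (s : nat) : Prop :=
  exists N, forall c : nat -> T,
    (exists a d, 0 < d /\ a + k.+2 * d < N /\ mono_ap c k.+1 a d) \/
    (exists f (a d : 'I_s -> nat), f < N /\
       (forall j, 0 < d j /\ a j + k.+1 * d j = f /\ f + d j < N /\
                  mono_ap c k (a j) (d j)) /\
       injective (fun j => c (a j))).

Lemma focused_aps0 k T : focused_aps k T 0.
Proof.
exists 1 => c; right; exists 0, (fun _ => 0), (fun _ => 0).
by split=> //; split=> [[]|[]].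
Qed.

Lemma unlift_max_inj (T : Type) s (g : 'I_s -> T) x :
  injective g -> (forall j, g j <> x) ->
  injective (fun j : 'I_s.+1 => oapp g x (unlift ord_max j)).
Proof.
move=> g_inj fresh j1 j2.
case: unliftP => [j1' ->|->]; case: unliftP => [j2' ->|->] //=.
- by move/g_inj ->.
- by move/fresh.
- by move/esym/fresh.
Qed.

Section AcrossBlocks.

Variables (T : eqType) (c : nat -> T) (k n b D : nat).
Hypothesis block_periodic :
  forall i t, i <= k -> t < n -> c ((b + i * D) * n + t) = c (b * n + t).

Lemma mono_ap_across_blocks a d :
  a + k * d < n -> mono_ap (fun x => c (b * n + x)) k a d ->
  mono_ap c k (b * n + a) (d + D * n).
Proof.
move=> akd AP i ik.
have -> : b * n + a + i * (d + D * n) = (b + i * D) * n + (a + i * d) by nia.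
by rewrite block_periodic ?AP //; apply: leq_ltn_trans akd; nia.
Qed.

End AcrossBlocks.

(* Colour the blocks of length n (the bound of [focused_aps k T s]) by their
   colour pattern; a block progression b, b + D, ..., b + (k+1) D moves every
   progression of the block b by D n, turns its focus point into a new
   progression of difference D n, and all of them focus at block b + (k+1) D. *)
Lemma focused_aps_step k T s :
  vdw_margin k -> focused_aps k T s -> focused_aps k T s.+1.
Proof.
move=> vdw_k [n Hn].
have [M HM] := vdw_k {ffun 'I_n -> T}.
exists (M.*2 * n) => c.
have [b [D [D0 [bM block_ap]]]] := HM (fun x => [ffun t : 'I_n => c (x * n + t)]).
have block_periodic i t : i <= k -> t < n -> c ((b + i * D) * n + t) = c (b * n + t).
  move=> ik tn; have := congr1 (fun g : {ffun 'I_n -> T} => g (Ordinal tn)) (block_ap i ik).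
  by rewrite !ffunE.
have bn : b.+1 * n <= M.*2 * n by rewrite leq_mul2r; apply/orP; right; lia.
case: (Hn (fun x => c (b * n + x))) => [[a [d [d0 [adn AP]]]]|[f [A [Dj [fn [HA inj]]]]]].
  left; exists (b * n + a), d; split=> //; split; first nia.
  by move=> i ik; rewrite -addnA AP.
case: (boolP [exists j, c (b * n + A j) == c (b * n + f)]) => [/existsP[j /eqP Ej]|].
  have [Dj0 [Af [fD APj]]] := HA j.
  left; exists (b * n + A j), (Dj j); split=> //; split; first nia.
  apply: mono_ap_extend; first by move=> i ik; rewrite -addnA APj.
  by rewrite -addnA Af Ej.
rewrite negb_exists => /forallP fresh; right.
pose A' j := oapp A f (unlift ord_max j); pose D' j := oapp Dj 0 (unlift ord_max j).
have HA' j : A' j + k.+1 * D' j = f /\ f + D' j < n /\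
             mono_ap (fun x => c (b * n + x)) k (A' j) (D' j).
  rewrite /A' /D'; case: unliftP => [j' _|_] /=; last first.
    by rewrite muln0 !addn0; split=> //; split=> // i _; rewrite muln0 addn0.
  by have [_ [Af [fD APj]]] := HA j'.
have bk2 : (b + k.+2 * D).+1 <= M.*2 by nia.
exists ((b + k.+1 * D) * n + f), (fun j => b * n + A' j), (fun j => D' j + D * n).
split; first nia.
split.
  move=> j; have [Af [fD APj]] := HA' j; split; first nia.
  split; first nia.
  split; first by have := leq_mul bk2 (leqnn n); nia.
  by apply: mono_ap_across_blocks => //; nia.
apply: (eq_inj (unlift_max_inj (g := fun j => c (b * n + A j)) (x := c (b * n + f)) _ _)).
- by move=> j1 j2 /inj.
- by move=> j Ej; move: (fresh j); rewrite Ej eqxx.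
- by move=> j; rewrite /A'; case: unlift.
Qed.

Theorem van_der_waerden k : vdw_margin k.
Proof.
elim: k => [|k IH] T.
  exists 2 => c; exists 0, 1; split=> //; split=> // i.
  by rewrite leqn0 => /eqP ->.
have [N HN] : focused_aps k T #|T|.
  by elim: #|T| => [|s]; [exact: focused_aps0 | exact: focused_aps_step].
exists N => c; case: (HN c) => [//|[f [A [D [fN [HA inj]]]]]].
have /codomP[j Ej] : c f \in codom (fun j => c (A j)).
  by apply: (inj_card_onto inj); rewrite card_ord.
have [D0 [Af [fD APj]]] := HA j.
exists (A j), (D j); split=> //; split; first nia.
by apply: mono_ap_extend; rewrite // Af Ej.
Qed.

Lemma colouring_long_mono_ap (T : finType) (c : nat -> T) K :
  exists a D, 0 < a /\ 0 < D /\ mono_ap c K a D.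
Proof.
have [N HN] := van_der_waerden K T.
have [a [D [D0 [_ AP]]]] := HN (fun x => c x.+1).
by exists a.+1, D; split=> //; split=> // i iK; have := AP i iK.
Qed.

Lemma piecewise_syndetic_long_ap (A : nat -> Prop) K :
  piecewise_syndetic A -> exists a D, 0 < D /\ forall t, t <= K -> A (a + t * D).
Proof.
case=> b Hb.
have [N HN] := van_der_waerden K 'I_b.+1.
have [x [_ Hx]] := Hb N.
have offset_exists t : exists e : 'I_b.+1, t <= N -> A (x + t + e).
  case: (leqP t N) => tN; last by exists ord0.
  have [z [/andP[z1 z2] Az]] := Hx (x + t) ltac:(lia).
  exists (inord (z - (x + t))) => _; rewrite inordK; last lia.
  by have -> : x + t + (z - (x + t)) = z by lia.
have [o oP] := functional_choice _ offset_exists.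
have [a [D [D0 [aN AP]]]] := HN o.
exists (x + a + o a), D; split=> // t tK.
have tN : a + t * D <= N by nia.
by have := oP _ tN; rewrite (AP t tK); congr A; lia.
Qed.

Local Open Scope ring_scope.

Definition ap_poly (D a d : nat) : {poly nat} := D%:P * 'X^d + a%:P.

Lemma size_ap_poly D a d : (0 < D)%N -> (0 < d)%N -> size (ap_poly D a d) = d.+1.
Proof.
move=> D0 d0.
have size_lead : size (D%:P * 'X^d : {poly nat}) = d.+1.
  by rewrite size_mulXn ?polyC_eq0 -?lt0n // size_polyC -lt0n D0 addn1.
by rewrite size_polyDl size_lead // size_polyC; case: (a != 0).
Qed.

Lemma horner_ap_poly D a d j : (ap_poly D a d).[j] = (a + j ^ d * D)%N.
Proof. by rewrite hornerD hornerM hornerXn !hornerC natrXE addnC mulnC. Qed.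

Lemma ap_polys_in (B : nat -> Prop) m (d l : 'I_m -> nat) a D :
  (forall i, 0 < d i)%N -> (0 < D)%N ->
  (forall t, t <= \sum_(i < m) l i ^ d i -> B (a + t * D))%N ->
  exists P : 'I_m -> {poly nat},
    (forall i, nat_poly_deg (P i) (d i)) /\
    (forall i (j : nat), (j <= l i)%N -> B (P i).[j]).
Proof.
move=> hd D0 AP; exists (fun i => ap_poly D a (d i)); split.
  by move=> i; apply: size_ap_poly.
move=> i j jl; rewrite horner_ap_poly; apply: AP.
apply: (@leq_trans (l i ^ d i)); first by rewrite leq_exp2r.
by rewrite (bigD1 i) //= leq_addr.
Qed.

Theorem mainTheorem5 (m : nat) (d l : 'I_m -> nat)
    (hd : forall i, (0 < d i)%N) (hl : forall i, (0 < l i)%N) :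
  (forall (k : nat) (c : nat -> 'I_k),
     exists (P : 'I_m -> {poly nat}) (a : 'I_k),
       (forall i, nat_poly_deg (P i) (d i)) /\
       (forall i (j : nat), (1 <= j <= l i)%N ->
          (0 < (P i).[j])%N /\ c (P i).[j] = a))
  /\
  (forall A : nat -> Prop,
     (forall n, A n -> (0 < n)%N) ->
     piecewise_syndetic A ->
     exists P : 'I_m -> {poly nat},
       (forall i, nat_poly_deg (P i) (d i)) /\
       (forall i (j : nat), (1 <= j <= l i)%N -> A (P i).[j])).
Proof.
pose K := (\sum_(i < m) l i ^ d i)%N.
split=> [k c | A _ A_ps].
  have [a [D [a0 [D0 AP]]]] := colouring_long_mono_ap c K.
  have [P [degP inP]] := ap_polys_in (B := fun x => (0 < x)%N /\ c x = c a) hd D0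
    (fun t tK => conj (ltn_addr _ a0) (AP t tK)).
  by exists P, (c a); split=> // i j /andP[_ jl]; apply: inP.
have [a [D [D0 AP]]] := piecewise_syndetic_long_ap K A_ps.
have [P [degP inP]] := ap_polys_in hd D0 AP.
by exists P; split=> // i j /andP[_ jl]; apply: inP.
Qed.
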